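(* Suppose Assumptions 1–4 hold. Then the social welfare $W(\mathbf{x})$ achieved at any Cournot candidate $\mathbf{x}$ is positive, and the optimal social welfare $\sup_{\mathbf{y}\ge 0}W(\mathbf{y})$ is positive.
   Context: Cournot model: $N$ suppliers, inverse demand $p:[0,\infty)\to[0,\infty)$, supplier $n$ has cost $C_n:[0,\infty)\to[0,\infty)$ and chooses $x_n\ge0$; $X=\sum_n x_n$. $\partial_\pm$ denote right/left derivatives; $C_n'(0)$ is the right derivative at $0$. Assumption 1: each $C_n$ is convex, continuous, nondecreasing on $[0,\infty)$, continuously differentiable on $(0,\infty)$, with $C_n(0)=0$. Assumption 2: $p$ is continuous, nonnegative, nonincreasing, $p(0)>0$; its right derivative at $0$ exists and at every $q>0$ its left and right derivatives exist. Assumption 3: there exists $R>0$ such that $p(R)\le\min_n C_n'(0)$. Assumption 4: $p(0)>\min_n C_n'(0)$. Social welfare of $\mathbf{x}\ge0$: $W(\mathbf{x})=\int_0^X p(q)\,dq-\sum_{n=1}^N C_n(x_n)$. A nonnegative vector $\mathbf{x}$ is a Cournot candidate if for every $n$: $C_n'(x_n)\le p(X)+x_n\,\partial_-p(X)$ whenever $x_n>0$, and $C_n'(x_n)\ge p(X)+x_n\,\partial_+p(X)$. *)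

From Stdlib Require Import Reals.
Open Scope R_scope.

Fixpoint sumN (N : nat) (f : nat -> R) : R :=
  match N with
  | O => 0
  | S k => sumN k f + f k
  end.

Definition right_deriv (f : R -> R) (x l : R) : Prop :=
  forall eps, 0 < eps -> exists delta, 0 < delta /\
    forall h, 0 < h < delta -> Rabs ((f (x + h) - f x) / h - l) < eps.

Definition left_deriv (f : R -> R) (x l : R) : Prop :=
  forall eps, 0 < eps -> exists delta, 0 < delta /\
    forall h, 0 < h < delta -> Rabs ((f (x - h) - f x) / (- h) - l) < eps.

Definition cont_nonneg (f : R -> R) : Prop :=
  forall x, 0 <= x -> limit1_in f (fun y => 0 <= y) (f x) x.

Definition convex_nonneg (f : R -> R) : Prop :=
  forall a b t, 0 <= a -> 0 <= b -> 0 <= t <= 1 ->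
    f (t * a + (1 - t) * b) <= t * f a + (1 - t) * f b.

Definition nondecr_nonneg (f : R -> R) : Prop :=
  forall a b, 0 <= a -> a <= b -> f a <= f b.

Definition nonincr_nonneg (f : R -> R) : Prop :=
  forall a b, 0 <= a -> a <= b -> f b <= f a.

Definition assumption1 (C dC : R -> R) : Prop :=
  convex_nonneg C /\ cont_nonneg C /\ nondecr_nonneg C /\ C 0 = 0 /\
  (forall x, 0 < x -> derivable_pt_lim C x (dC x)) /\
  (forall x, 0 < x -> continuity_pt dC x) /\
  right_deriv C 0 (dC 0).

Definition assumption2 (p dpm dpp : R -> R) : Prop :=
  cont_nonneg p /\ (forall q, 0 <= q -> 0 <= p q) /\ nonincr_nonneg p /\
  0 < p 0 /\
  (forall q, 0 <= q -> right_deriv p q (dpp q)) /\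
  (forall q, 0 < q -> left_deriv p q (dpm q)).

Definition total (N : nat) (x : nat -> R) : R := sumN N x.

Definition nonneg_vec (N : nat) (x : nat -> R) : Prop :=
  forall n, (n < N)%nat -> 0 <= x n.

Definition welfare_is (N : nat) (p : R -> R) (C : nat -> R -> R)
    (x : nat -> R) (w : R) : Prop :=
  exists pr : Riemann_integrable p 0 (total N x),
    w = RiemannInt pr - sumN N (fun n => C n (x n)).

Definition cournot_candidate (N : nat) (p dpm dpp : R -> R)
    (dC : nat -> R -> R) (x : nat -> R) : Prop :=
  nonneg_vec N x /\
  forall n, (n < N)%nat ->
    (0 < x n -> dC n (x n) <= p (total N x) + x n * dpm (total N x)) /\
    dC n (x n) >= p (total N x) + x n * dpp (total N x).

(* Write X = x_1 + ... + x_N and W(x) = int_0^X p - sum_n C_n(x_n).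

   At a candidate, every active supplier has marginal
   cost C_n'(x_n) <= p(X) + x_n p'_-(X) <= p(X), since a nonincreasing p has
   a nonpositive left derivative.  Convexity of C_n with C_n(0) = 0 gives
   C_n(x_n) <= x_n C_n'(x_n) <= x_n p(X), so the total cost is at most the
   revenue X p(X), which in turn is at most int_0^X p because p is
   nonincreasing.  One of the two inequalities is strict: if p(X) < p(0),
   continuity of p at 0 makes the integral exceed X p(X); if p(X) = p(0),
   the supplier m of Assumption 4 must be active and its cost is strictly
   below x_m p(X), because C_m lies below the slope p(0) > C_m'(0) near 0.

   Supplying a small quantity h by supplier m alone gives
   W > 0, since int_0^h p ~ h p(0) while C_m(h) ~ h C_m'(0).  Conversely,
   C_n(y) >= y C_n'(0) >= y p(R) by convexity and Assumption 3, while
   int_0^Y p <= R p(0) + (Y - R) p(R); hence W <= R p(0) and the supremum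
   exists (completeness of R) and is positive. *)

From Stdlib Require Import Reals Lra Lia.
From Coquelicot Require Import Coquelicot.
Open Scope R_scope.

(** * Finite sums *)

Lemma sumN_ext N f g :
  (forall n, (n < N)%nat -> f n = g n) -> sumN N f = sumN N g.
Proof.
  induction N as [|N IH]; simpl; intros H; [reflexivity|].
  rewrite IH, H; [reflexivity|lia|intros; apply H; lia].
Qed.

Lemma sumN_scal N c f : sumN N (fun n => f n * c) = sumN N f * c.
Proof. induction N as [|N IH]; simpl; [ring|rewrite IH; ring]. Qed.

Lemma sumN_le N f g :
  (forall n, (n < N)%nat -> f n <= g n) -> sumN N f <= sumN N g.
Proof.
  induction N as [|N IH]; simpl; intros H; [lra|].
  assert (f N <= g N) by (apply H; lia).
  assert (sumN N f <= sumN N g) by (apply IH; intros; apply H; lia).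
  lra.
Qed.

Lemma sumN_lt N f g m :
  (forall n, (n < N)%nat -> f n <= g n) -> (m < N)%nat -> f m < g m ->
  sumN N f < sumN N g.
Proof.
  induction N as [|N IH]; simpl; intros H Hm Hlt; [lia|].
  assert (Hle : f N <= g N) by (apply H; lia).
  destruct (Nat.eq_dec m N) as [->|Hne].
  - assert (sumN N f <= sumN N g) by (apply sumN_le; intros; apply H; lia).
    lra.
  - assert (sumN N f < sumN N g) by (apply IH; [intros; apply H|..]; auto; lia).
    lra.
Qed.

Lemma sumN_zero N : sumN N (fun _ => 0) = 0.
Proof. induction N as [|N IH]; simpl; [reflexivity|rewrite IH; ring]. Qed.

Lemma sumN_nonneg N f : (forall n, (n < N)%nat -> 0 <= f n) -> 0 <= sumN N f.
Proof. intros H. rewrite <- (sumN_zero N). apply sumN_le; auto. Qed.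

Lemma sumN_single N f m :
  (m < N)%nat -> (forall n, (n < N)%nat -> n <> m -> f n = 0) ->
  sumN N f = f m.
Proof.
  induction N as [|N IH]; simpl; intros Hm H; [lia|].
  destruct (Nat.eq_dec m N) as [->|Hne].
  - rewrite (sumN_ext N f (fun _ => 0)), sumN_zero; [ring|].
    intros; apply H; lia.
  - rewrite (H N), IH; [ring|lia|intros; apply H; lia|lia|auto].
Qed.

Lemma coord_le_total N x n : nonneg_vec N x -> (n < N)%nat -> x n <= total N x.
Proof.
  intros Hx Hn. unfold total.
  set (e := fun k => if Nat.eq_dec k n then x n else 0).
  assert (He : sumN N e = x n).
  { rewrite (sumN_single N e n Hn); unfold e.
    - destruct (Nat.eq_dec n n); congruence.
    - intros k _ Hk. destruct (Nat.eq_dec k n); congruence. }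
  rewrite <- He. apply sumN_le. intros k Hk. unfold e.
  destruct (Nat.eq_dec k n) as [->|_]; [lra|auto].
Qed.

Lemma total_nonneg N x : nonneg_vec N x -> 0 <= total N x.
Proof. apply sumN_nonneg. Qed.

(** * Integrals of a continuous nonincreasing price *)

Lemma RInt_ge_const f a b c :
  a <= b -> ex_RInt f a b -> (forall q, a < q < b -> c <= f q) ->
  (b - a) * c <= RInt f a b.
Proof.
  intros Hab Hf Hc. replace ((b - a) * c) with (RInt (fun _ => c) a b)
    by (rewrite RInt_const; reflexivity).
  apply RInt_le; auto. apply ex_RInt_const.
Qed.

Lemma RInt_le_const f a b c :
  a <= b -> ex_RInt f a b -> (forall q, a < q < b -> f q <= c) ->
  RInt f a b <= (b - a) * c.
Proof.
  intros Hab Hf Hc. replace ((b - a) * c) with (RInt (fun _ => c) a b)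
    by (rewrite RInt_const; reflexivity).
  apply RInt_le; auto. apply ex_RInt_const.
Qed.

Section PriceIntegral.

Variable p : R -> R.
Hypothesis p_cont : cont_nonneg p.
Hypothesis p_nonincr : nonincr_nonneg p.

(* p is integrable on every interval of [0, oo): extend it by p(0) to the
   left to obtain a function continuous on all of R. *)
Lemma price_integrable a b : 0 <= a <= b -> ex_RInt p a b.
Proof.
  intros Hab. set (q := fun y => p (Rmax 0 y)).
  assert (Hq : forall y, continuity_pt q y).
  { intros y eps He.
    destruct (p_cont (Rmax 0 y) (Rmax_l 0 y) eps He) as [alp [Ha Hal]].
    exists alp; split; auto. intros z [_ Hz]. apply Hal. split; [apply Rmax_l|].
    simpl in *. unfold R_dist in *. eapply Rle_lt_trans; [|exact Hz].
    unfold Rmax; destruct (Rle_dec 0 z), (Rle_dec 0 y); unfold Rabs;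
      repeat destruct Rcase_abs; lra. }
  apply ex_RInt_ext with q.
  - intros y Hy. rewrite Rmin_left, Rmax_right in Hy by lra.
    unfold q; rewrite Rmax_right by lra; reflexivity.
  - apply ex_RInt_Reals_1, continuity_implies_RiemannInt; [lra|auto].
Qed.

Lemma revenue_le_integral X : 0 <= X -> X * p X <= RInt p 0 X.
Proof.
  intros HX. replace (X * p X) with ((X - 0) * p X) by ring.
  apply RInt_ge_const; [lra|apply price_integrable; lra|].
  intros q Hq; apply p_nonincr; lra.
Qed.

Lemma integral_near_zero c :
  c < p 0 -> exists del, 0 < del /\ forall h, 0 <= h <= del -> h * c <= RInt p 0 h.
Proof.
  intros Hc. destruct (p_cont 0 (Rle_refl 0) (p 0 - c)) as [alp [Ha Hal]]; [lra|].
  exists (alp / 2); split; [lra|]. intros h Hh.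
  replace (h * c) with ((h - 0) * c) by ring.
  apply RInt_ge_const; [lra|apply price_integrable; lra|].
  intros q Hq.
  assert (Hd : R_dist q 0 < alp) by (unfold R_dist, Rabs; destruct Rcase_abs; lra).
  specialize (Hal q (conj (ltac:(lra) : 0 <= q) Hd)). simpl in Hal. unfold R_dist in Hal.
  pose proof (Rle_abs (- (p q - p 0))) as Habs. rewrite Rabs_Ropp in Habs. lra.
Qed.

Lemma revenue_lt_integral X : 0 < X -> p X < p 0 -> X * p X < RInt p 0 X.
Proof.
  intros HX Hlt.
  destruct (integral_near_zero ((p 0 + p X) / 2)) as [del [Hdel Hnear]]; [lra|].
  set (a := Rmin X del).
  assert (Ha : 0 < a) by (apply Rmin_glb_lt; lra).
  assert (HaX : a <= X) by apply Rmin_l.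
  assert (Had : a <= del) by apply Rmin_r.
  assert (Hhead := Hnear a (ltac:(lra))).
  assert (Htail : (X - a) * p X <= RInt p a X).
  { apply RInt_ge_const; [lra|apply price_integrable; lra|].
    intros q Hq; apply p_nonincr; lra. }
  rewrite <- (RInt_Chasles p 0 a X) by (apply price_integrable; lra).
  change plus with Rplus. nra.
Qed.

Lemma integral_le_two_step R0 Y :
  0 <= R0 -> 0 <= Y -> RInt p 0 Y <= R0 * p 0 + (Y - R0) * p R0.
Proof.
  intros HR HY.
  assert (Hp : p R0 <= p 0) by (apply p_nonincr; lra).
  destruct (Rle_lt_dec Y R0) as [Hle|Hlt].
  - assert (RInt p 0 Y <= (Y - 0) * p 0).
    { apply RInt_le_const; [lra|apply price_integrable; lra|].
      intros q Hq; apply p_nonincr; lra. }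
    nra.
  - rewrite <- (RInt_Chasles p 0 R0 Y) by (apply price_integrable; lra).
    change plus with Rplus.
    assert (RInt p 0 R0 <= (R0 - 0) * p 0).
    { apply RInt_le_const; [lra|apply price_integrable; lra|].
      intros q Hq; apply p_nonincr; lra. }
    assert (RInt p R0 Y <= (Y - R0) * p R0).
    { apply RInt_le_const; [lra|apply price_integrable; lra|].
      intros q Hq; apply p_nonincr; lra. }
    lra.
Qed.

End PriceIntegral.

Lemma left_deriv_nonpos p X l :
  nonincr_nonneg p -> 0 < X -> left_deriv p X l -> l <= 0.
Proof.
  intros Hp HX Hd. destruct (Rle_lt_dec l 0) as [ok|Hlt]; auto. exfalso.
  destruct (Hd l Hlt) as [del [Hdel Hdd]].
  set (h := Rmin X del / 2).
  assert (Hh0 : 0 < h) by (unfold h; assert (0 < Rmin X del) by (apply Rmin_glb_lt; lra); lra).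
  assert (HhX : h < X) by (unfold h; pose proof (Rmin_l X del); lra).
  assert (Hhd : h < del) by (unfold h; pose proof (Rmin_r X del); lra).
  specialize (Hdd h (ltac:(lra))).
  assert (Hq : (p (X - h) - p X) / - h <= 0).
  { replace ((p (X - h) - p X) / - h) with (- ((p (X - h) - p X) / h))
      by (field; lra).
    assert (p X <= p (X - h)) by (apply Hp; lra).
    assert (0 <= (p (X - h) - p X) / h) by (apply Rdiv_le_0_compat; lra).
    lra. }
  pose proof (Rle_abs (- ((p (X - h) - p X) / - h - l))) as Habs.
  rewrite Rabs_Ropp in Habs. lra.
Qed.

(** * Convex costs *)

Section ConvexCost.

Variable C : R -> R.
Hypothesis C_convex : convex_nonneg C.

Lemma chord_le_deriv a b D :
  0 <= a < b -> derivable_pt_lim C b D -> C b - C a <= (b - a) * D.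
Proof.
  intros [Ha Hab] Hd.
  destruct (Rle_lt_dec (C b - C a) ((b - a) * D)) as [ok|Hlt]; auto. exfalso.
  set (s := (C b - C a) / (b - a)).
  assert (HCs : C b - C a = s * (b - a)) by (unfold s; field; lra).
  assert (Hs : D < s) by nra.
  destruct (Hd (s - D)) as [del Hdel]; [lra|].
  pose proof (cond_pos del) as Hdel0.
  set (t := Rmin (1/2) (del / (2 * (b - a)))).
  assert (Ht0 : 0 < t).
  { apply Rmin_glb_lt; [lra|apply Rdiv_lt_0_compat; lra]. }
  assert (Ht1 : t <= 1/2) by apply Rmin_l.
  assert (Ht2 : t * (b - a) < del).
  { assert (t <= del / (2 * (b - a))) by apply Rmin_r.
    apply Rle_lt_trans with (del / (2 * (b - a)) * (b - a)).
    - apply Rmult_le_compat_r; lra.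
    - field_simplify; lra. }
  set (h := - (t * (b - a))).
  assert (Hh0 : h <> 0) by (unfold h; nra).
  assert (Hha : Rabs h < del).
  { unfold h. rewrite Rabs_Ropp, Rabs_pos_eq; nra. }
  specialize (Hdel h Hh0 Hha).
  assert (Hconv := C_convex a b t Ha (ltac:(lra)) (ltac:(lra))).
  replace (t * a + (1 - t) * b) with (b + h) in Hconv by (unfold h; ring).
  (* the difference quotient at b from the left is at least the chord slope *)
  assert (Hq : s <= (C (b + h) - C b) / h).
  { apply Rmult_le_reg_r with (t * (b - a)); [nra|].
    replace ((C (b + h) - C b) / h * (t * (b - a))) with (C b - C (b + h))
      by (unfold h; field; nra).
    nra. }
  pose proof (Rle_abs ((C (b + h) - C b) / h - D)). lra.
Qed.

Hypothesis C_zero : C 0 = 0.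

Lemma slope_at_zero_le_cost y d0 : right_deriv C 0 d0 -> 0 < y -> y * d0 <= C y.
Proof.
  intros Hd Hy.
  destruct (Rle_lt_dec (y * d0) (C y)) as [ok|Hlt]; auto. exfalso.
  set (s := C y / y).
  assert (Hs : s < d0).
  { unfold s. apply Rmult_lt_reg_r with y; [lra|]. field_simplify; lra. }
  destruct (Hd (d0 - s)) as [del [Hdel Hdd]]; [lra|].
  set (h := Rmin y (del / 2)).
  assert (Hh0 : 0 < h) by (apply Rmin_glb_lt; lra).
  assert (Hhy : h <= y) by apply Rmin_l.
  assert (Hhd : h <= del / 2) by apply Rmin_r.
  specialize (Hdd h (ltac:(lra))). rewrite Rplus_0_l, C_zero in Hdd.
  assert (Ht : 0 <= h / y <= 1).
  { split; [apply Rdiv_le_0_compat; lra|].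
    apply Rmult_le_reg_r with y; [lra|]. field_simplify; lra. }
  assert (Hconv := C_convex y 0 (h / y) (ltac:(lra)) (ltac:(lra)) Ht).
  replace (h / y * y + (1 - h / y) * 0) with h in Hconv by (field; lra).
  replace (h / y * C y + (1 - h / y) * C 0) with (h * s) in Hconv
    by (rewrite C_zero; unfold s; field; lra).
  assert (Hq : (C h - 0) / h <= s).
  { apply Rmult_le_reg_r with h; [lra|]. field_simplify; lra. }
  pose proof (Rle_abs (- ((C h - 0) / h - d0))) as Habs.
  rewrite Rabs_Ropp in Habs. lra.
Qed.

Lemma cost_below_slope_near_zero d0 c :
  right_deriv C 0 d0 -> d0 < c ->
  exists del, 0 < del /\ forall h, 0 < h <= del -> C h < h * c.
Proof.
  intros Hd Hc. destruct (Hd (c - d0)) as [del [Hdel Hdd]]; [lra|].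
  exists (del / 2); split; [lra|]. intros h Hh.
  specialize (Hdd h (ltac:(lra))). rewrite Rplus_0_l, C_zero in Hdd.
  pose proof (Rle_abs ((C h - 0) / h - d0)).
  assert (Hq : (C h - 0) / h < c) by lra.
  apply Rmult_lt_compat_r with (r := h) in Hq; [|lra].
  replace ((C h - 0) / h * h) with (C h) in Hq by (field; lra). lra.
Qed.

End ConvexCost.

(** * Welfare in the Cournot market *)

Definition welfare (N : nat) (p : R -> R) (C : nat -> R -> R) (x : nat -> R) : R :=
  RInt p 0 (total N x) - sumN N (fun n => C n (x n)).

Lemma welfare_is_welfare N p C x :
  cont_nonneg p -> nonneg_vec N x -> welfare_is N p C x (welfare N p C x).
Proof.
  intros Hp Hx.
  assert (HI : ex_RInt p 0 (total N x))
    by (apply price_integrable; [auto|split; [lra|apply total_nonneg; auto]]).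
  exists (ex_RInt_Reals_0 _ _ _ HI). unfold welfare.
  rewrite (RInt_Reals _ _ _ (ex_RInt_Reals_0 _ _ _ HI)). reflexivity.
Qed.

Lemma welfare_is_unique N p C x w : welfare_is N p C x w -> w = welfare N p C x.
Proof. intros [pr ->]. unfold welfare. rewrite (RInt_Reals _ _ _ pr). reflexivity. Qed.

Section Market.

Variables (N : nat) (p dpm dpp : R -> R) (C dC : nat -> R -> R).
Hypothesis A1 : forall n, (n < N)%nat -> assumption1 (C n) (dC n).
Hypothesis A2 : assumption2 p dpm dpp.

Let p_cont : cont_nonneg p. Proof. apply A2. Qed.
Let p_nonincr : nonincr_nonneg p. Proof. apply A2. Qed.

Lemma candidate_marginal_cost_le_price x n :
  cournot_candidate N p dpm dpp dC x -> (n < N)%nat -> 0 < x n ->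
  dC n (x n) <= p (total N x).
Proof.
  intros [Hx Hfoc] Hn Hpos.
  assert (HX : 0 < total N x) by (pose proof (coord_le_total N x n Hx Hn); lra).
  assert (Hdpm : dpm (total N x) <= 0).
  { apply (left_deriv_nonpos p (total N x)); auto. apply A2; auto. }
  destruct (Hfoc n Hn) as [Hle _]. specialize (Hle Hpos). nra.
Qed.

Lemma candidate_cost_le_revenue x n :
  cournot_candidate N p dpm dpp dC x -> (n < N)%nat ->
  C n (x n) <= x n * p (total N x).
Proof.
  intros Hcand Hn.
  destruct (A1 n Hn) as [Cconv [_ [_ [C0 [Cder _]]]]].
  destruct (proj1 Hcand n Hn) as [Hpos|Hzero].
  - pose proof (chord_le_deriv (C n) Cconv 0 (x n) _ (ltac:(lra)) (Cder _ Hpos)).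
    pose proof (candidate_marginal_cost_le_price x n Hcand Hn Hpos).
    rewrite C0 in *. nra.
  - rewrite <- Hzero, C0. lra.
Qed.

Variable m : nat.
Hypothesis Hm : (m < N)%nat.
Hypothesis Hdm : dC m 0 < p 0.

(* If the market price is still p(0), supplier m is active (its marginal cost
   at 0 is below p(0)), and its cost is strictly below its revenue. *)
Lemma candidate_cost_lt_revenue x :
  cournot_candidate N p dpm dpp dC x -> p 0 <= p (total N x) ->
  C m (x m) < x m * p (total N x).
Proof.
  intros Hcand Htop.
  assert (Hxm : 0 < x m).
  { destruct (proj1 Hcand m Hm) as [ok|Hzero]; auto. exfalso.
    destruct (proj2 Hcand m Hm) as [_ Hge]. rewrite <- Hzero in Hge. lra. }
  assert (Hprice : p (total N x) = p 0).
  { assert (p (total N x) <= p 0)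
      by (apply p_nonincr; [lra|apply total_nonneg, Hcand]).
    lra. }
  destruct (A1 m Hm) as [Cconv [_ [_ [C0 [Cder [_ Cright]]]]]].
  destruct (cost_below_slope_near_zero (C m) C0 _ (p 0) Cright Hdm)
    as [del [Hdel Hbelow]].
  set (h := Rmin (x m) del / 2).
  assert (0 < Rmin (x m) del) by (apply Rmin_glb_lt; lra).
  assert (Hhx : h < x m) by (unfold h; pose proof (Rmin_l (x m) del); lra).
  assert (Hhd : 0 < h <= del) by (unfold h; pose proof (Rmin_r (x m) del); lra).
  pose proof (Hbelow h Hhd).
  pose proof (chord_le_deriv (C m) Cconv h (x m) _ (ltac:(lra)) (Cder _ Hxm)).
  pose proof (candidate_marginal_cost_le_price x m Hcand Hm Hxm).
  rewrite Hprice in *.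
  assert (0 <= (x m - h) * (p 0 - dC m (x m))) by (apply Rmult_le_pos; lra).
  nra.
Qed.

(* Welfare at a Cournot candidate is positive: costs are at most revenue,
   revenue is at most the integral, and one of the two is strict. *)
Lemma candidate_welfare_pos x :
  cournot_candidate N p dpm dpp dC x -> 0 < welfare N p C x.
Proof.
  intros Hcand. unfold welfare. set (X := total N x).
  assert (HX : 0 <= X) by (apply total_nonneg, Hcand).
  assert (Hrevenue : sumN N (fun n => x n * p X) = X * p X) by apply sumN_scal.
  assert (Hcost : sumN N (fun n => C n (x n)) <= X * p X).
  { rewrite <- Hrevenue. apply sumN_le. intros; apply candidate_cost_le_revenue; auto. }
  destruct (Rle_lt_dec (p 0) (p X)) as [Htop|Hdrop].
  - assert (sumN N (fun n => C n (x n)) < X * p X).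
    { rewrite <- Hrevenue. apply sumN_lt with m; auto.
      - intros; apply candidate_cost_le_revenue; auto.
      - apply candidate_cost_lt_revenue; auto. }
    pose proof (revenue_le_integral p p_cont p_nonincr X HX). lra.
  - assert (HXpos : 0 < X) by (destruct HX as [ok|Hz]; [auto|rewrite <- Hz in Hdrop; lra]).
    pose proof (revenue_lt_integral p p_cont p_nonincr X HXpos Hdrop). lra.
Qed.

(* Supplier m alone producing a small quantity achieves positive welfare. *)
Lemma small_output_welfare_pos :
  exists y, nonneg_vec N y /\ 0 < welfare N p C y.
Proof.
  destruct (A1 m Hm) as [_ [_ [_ [C0 [_ [_ Cright]]]]]].
  set (c := (p 0 + dC m 0) / 2).
  destruct (cost_below_slope_near_zero (C m) C0 _ c Cright (ltac:(unfold c; lra)))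
    as [del1 [Hdel1 Hcost]].
  destruct (integral_near_zero p p_cont c (ltac:(unfold c; lra))) as [del2 [Hdel2 Hint]].
  pose proof (Rmin_l del1 del2). pose proof (Rmin_r del1 del2).
  set (h := Rmin del1 del2) in *.
  assert (Hh : 0 < h) by (apply Rmin_glb_lt; lra).
  set (y := fun n => if Nat.eq_dec n m then h else 0).
  assert (Hy : y m = h) by (unfold y; destruct (Nat.eq_dec m m); congruence).
  assert (Hother : forall n, n <> m -> y n = 0)
    by (intros n Hn; unfold y; destruct (Nat.eq_dec n m); congruence).
  exists y; split.
  - intros n _. unfold y. destruct (Nat.eq_dec n m); lra.
  - unfold welfare, total.
    rewrite (sumN_single N y m Hm), (sumN_single N (fun n => C n (y n)) m Hm), Hy.
    + pose proof (Hcost h (ltac:(lra))). pose proof (Hint h (ltac:(lra))). lra.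
    + intros n Hn Hne. rewrite Hother by auto. apply A1; auto.
    + intros n _ Hne. auto.
Qed.

Variable R0 : R.
Hypothesis HR0 : 0 < R0.
Hypothesis HR0d : forall n, (n < N)%nat -> p R0 <= dC n 0.

(* Every production plan has welfare at most R p(0): each cost is at least
   p(R) times the output, while the integral is below the two-step bound. *)
Lemma welfare_le_bound y : nonneg_vec N y -> welfare N p C y <= R0 * p 0.
Proof.
  intros Hy. unfold welfare. set (Y := total N y).
  assert (HY : 0 <= Y) by (apply total_nonneg; auto).
  assert (Hcost : Y * p R0 <= sumN N (fun n => C n (y n))).
  { unfold Y, total. rewrite <- sumN_scal. apply sumN_le. intros n Hn.
    destruct (A1 n Hn) as [Cconv [_ [_ [C0 [_ [_ Cright]]]]]].
    pose proof (HR0d n Hn).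
    destruct (Hy n Hn) as [Hpos|Hzero].
    - pose proof (slope_at_zero_le_cost (C n) Cconv C0 _ _ Cright Hpos). nra.
    - rewrite <- Hzero, C0. lra. }
  pose proof (integral_le_two_step p p_cont p_nonincr R0 Y (ltac:(lra)) HY).
  assert (0 <= p R0) by (apply A2; lra).
  nra.
Qed.

End Market.

Theorem proposition5 (N : nat) (p dpm dpp : R -> R) (C dC : nat -> R -> R)
  (A1 : forall n, (n < N)%nat -> assumption1 (C n) (dC n))
  (A2 : assumption2 p dpm dpp)
  (A3 : exists R0, 0 < R0 /\ forall n, (n < N)%nat -> p R0 <= dC n 0)
  (A4 : exists n, (n < N)%nat /\ dC n 0 < p 0) :
  (forall x, cournot_candidate N p dpm dpp dC x ->
     exists w, welfare_is N p C x w /\ 0 < w) /\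
  (exists s, is_lub (fun w => exists y, nonneg_vec N y /\ welfare_is N p C y w) s
             /\ 0 < s).
Proof.
  destruct A3 as [R0 [HR0 HR0d]], A4 as [m [Hm Hdm]].
  assert (p_cont : cont_nonneg p) by apply A2.
  split.
  - intros x Hcand. exists (welfare N p C x). split.
    + apply welfare_is_welfare; [auto|apply Hcand].
    + eapply candidate_welfare_pos; eauto.
  - set (E := fun w => exists y, nonneg_vec N y /\ welfare_is N p C y w).
    destruct (small_output_welfare_pos N p dpm dpp C dC A1 A2 m Hm Hdm)
      as [y [Hy Hpos]].
    assert (Hwitness : E (welfare N p C y)) by (exists y; split; auto; apply welfare_is_welfare; auto).
    destruct (completeness E) as [s [Hub Hleast]].
    + exists (R0 * p 0). intros w [z [Hz Hw]]. rewrite (welfare_is_unique _ _ _ _ _ Hw).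
      eapply welfare_le_bound; eauto.
    + exists (welfare N p C y). exact Hwitness.
    + exists s. split; [split; auto|]. pose proof (Hub _ Hwitness). lra.
Qed.
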